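(* Let $n>5$ be prime and let $\gamma$ be a probability distribution on $\mathbb{Z}_n$ with $\gamma(k)\in\mathbb{Q}$ for all $k$. Suppose $\hat{\gamma}(x)=\hat{\gamma}(y)$ for some $x,y\in\mathbb{Z}_n\setminus\{0\}$, and let $f_1,f_2:\mathbb{Z}_n\to\{0,1\}$ satisfy $f_1(k)=f_2(x^{-1}yk)$ for all $k$ (operations in the field $\mathbb{Z}_n$). Then, for the random walk $v(t)$ with step distribution $\gamma$, the sequences $\{f_1(v(t))\}_{t\ge1}$ and $\{f_2(v(t))\}_{t\ge1}$ have the same distribution.
   Context: $\hat{\gamma}(x)=\sum_{k\in\mathbb{Z}_n}\omega_n^{kx}\gamma(k)$ with $\omega_n=e^{-2\pi i/n}$. The random walk $v(t)$ has $v(1)$ uniform on $\mathbb{Z}_n$ and independent steps with $\mathbb{P}(v(t+1)-v(t)=k)=\gamma(k)$. *)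

From HB Require Import structures.
From mathcomp Require Import all_boot all_order all_algebra.
From mathcomp Require Import reals trigo.
From mathcomp Require Import complex.
Set Implicit Arguments. Unset Strict Implicit. Unset Printing Implicit Defensive.
Import Order.TTheory GRing.Theory Num.Theory.
Local Open Scope ring_scope.
Local Open Scope complex_scope.

Definition omega (R : realType) (n : nat) : R[i] :=
  (cos (2 * pi / n%:R) +i* (- sin (2 * pi / n%:R)))%C.

(* Fourier transform  ghat(x) = sum_k omega_n^{k x} gamma(k) ; elements of
   'F_n are ordinals, k x is computed in nat (omega_n^n = 1). *)
Definition ghat (R : realType) (n : nat) (gamma : 'F_n -> rat) (x : 'F_n) : R[i] :=
  \sum_(k : 'F_n) omega R n ^+ (nat_of_ord k * nat_of_ord x)%N * ratr (gamma k).

Definition is_distr (n : nat) (gamma : 'F_n -> rat) : Prop :=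
  (forall k, 0 <= gamma k) /\ \sum_(k : 'F_n) gamma k = 1.

(* Probability that (f(v(1)), ..., f(v(T+1))) = w for the random walk
   with v(1) uniform on Z_n and i.i.d. steps v(t+1)-v(t) of law gamma.
   Paths are indexed by 'I_T.+1 (index i corresponds to time t = i+1). *)
Definition walk_fdd (n : nat) (gamma : 'F_n -> rat) (f : 'F_n -> bool)
    (T : nat) (w : 'I_T.+1 -> bool) : rat :=
  \sum_(p : {ffun 'I_T.+1 -> 'F_n})
     (n%:R)^-1
     * (\prod_(i < T) gamma (p (lift ord0 i) - p (widen_ord (leqnSn T) i)))
     * (\prod_(i < T.+1) (f (p i) == w i)%:R).

(* The processes (f1(v(t)))_{t>=1} and (f2(v(t)))_{t>=1} have the same law
   on {0,1}^N, i.e. all their finite-dimensional distributions agree. *)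
Definition same_law (n : nat) (gamma : 'F_n -> rat) (f1 f2 : 'F_n -> bool) : Prop :=
  forall (T : nat) (w : 'I_T.+1 -> bool),
    walk_fdd gamma f1 w = walk_fdd gamma f2 w.

From HB Require Import structures.
From mathcomp Require Import all_boot all_order all_algebra.
From mathcomp Require Import reals trigo complex.
From mathcomp Require Import ring.
From mathcomp Require Import algC cyclotomic fieldext.
Set Implicit Arguments. Unset Strict Implicit. Unset Printing Implicit Defensive.
Import Order.TTheory GRing.Theory Num.Theory.
Local Open Scope ring_scope.

(* Since n is prime and omega != 1, the minimal
   polynomial of omega over Q is 1 + X + ... + X^(n-1), so the only rational
   relations among 1, omega, ..., omega^(n-1) are multiples of their sum.
   Reindexing ghat(x) by m = k x and ghat(y) by m = k y turns
   ghat(x) = ghat(y) into such a relation with coefficients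
   gamma(m/x) - gamma(m/y), which sum to 0; hence they vanish and gamma is
   invariant under multiplication by c = x^-1 y.  Multiplying whole paths by
   c is then a bijection carrying the law of (f1(v(t)))_t to that of
   (f2(v(t)))_t. *)

Definition unity_sum_poly (n : nat) : {poly rat} := \poly_(i < n) 1.

Lemma size_unity_sum_poly n : (0 < n)%N -> size (unity_sum_poly n) = n.
Proof. by move=> n_gt0; rewrite size_poly_eq // oner_eq0. Qed.

Lemma unity_sum_poly_neq0 n : (0 < n)%N -> unity_sum_poly n != 0.
Proof. by move=> n_gt0; rewrite -size_poly_eq0 size_unity_sum_poly // -lt0n. Qed.

Lemma root_unity_sum_poly (F : numFieldType) n (w : F) : (0 < n)%N ->
  w ^+ n = 1 -> w != 1 -> root (map_poly ratr (unity_sum_poly n)) w.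
Proof.
move=> n_gt0 wn w1; rewrite /root horner_coef size_map_poly size_unity_sum_poly //.
have : (w - 1) * \sum_(i < n) w ^+ i = 0 by rewrite -subrX1 wn subrr.
move/eqP; rewrite mulf_eq0 subr_eq0 (negbTE w1) /= => /eqP sum_w.
apply/eqP; rewrite -[RHS]sum_w; apply: eq_bigr => i _.
by rewrite coef_map coef_poly ltn_ord /= rmorph1 mul1r.
Qed.

Lemma unity_sum_poly_irreducible n : prime n -> irreducible_poly (unity_sum_poly n).
Proof.
(* Over Q, a primitive n-th root of unity has the cyclotomic polynomial, of
   degree totient n = n - 1, as minimal polynomial. *)
move=> n_prime; have n_gt0 := prime_gt0 n_prime.
have [z z_prim] := C_prim_root_exists n_gt0.
have z_neq1 : z != 1.
  apply: contraTneq (prime_gt1 n_prime) => z1.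
  by have := prim_order_dvd z_prim 1; rewrite z1 expr1 eqxx dvdn1 => /eqP ->.
have [p [minz_p _] root_minz] := minCpolyP z.
have size_p : size p = n.
  rewrite -(size_map_poly (ratr : rat -> algC)) -minz_p.
  by rewrite (minCpoly_cyclotomic z_prim) size_cyclotomic totient_prime ?prednK.
have root_z := @root_unity_sum_poly algC _ z n_gt0 (prim_expr_order z_prim) z_neq1.
apply/(subfx_irreducibleP root_z (unity_sum_poly_neq0 n_gt0)).
move=> q; rewrite root_minz => p_dvd_q q_neq0.
by rewrite size_unity_sum_poly // -size_p dvdp_leq.
Qed.

Lemma horner1_unity_sum_poly n : (unity_sum_poly n).[1] = n%:R.
Proof.
rewrite horner_poly (eq_bigr (fun=> 1)) => [|i _]; last by rewrite expr1n mulr1.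
by rewrite sumr_const card_ord.
Qed.

Lemma unity_sum_poly_dvdp (F : numFieldType) n (w : F) (q : {poly rat}) :
  prime n -> w ^+ n = 1 -> w != 1 -> root (map_poly ratr q) w ->
  unity_sum_poly n %| q.
Proof.
move=> n_prime wn w1 qw.
rewrite -[_ %| _]negbK -irreducible_poly_coprime; last exact: unity_sum_poly_irreducible.
have root_w := root_unity_sum_poly (prime_gt0 n_prime) wn w1.
rewrite -(coprimep_map (ratr : rat -> F)); apply/negP => /coprimep_root/(_ root_w).
by rewrite -rootE qw.
Qed.

Lemma unity_root_poly_eq0 (F : numFieldType) n (w : F) (q : {poly rat}) :
  prime n -> w ^+ n = 1 -> w != 1 -> (size q <= n)%N ->
  root (map_poly ratr q) w -> q.[1] = 0 -> q = 0.
Proof.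
move=> n_prime wn w1 size_q qw.
have n_gt0 := prime_gt0 n_prime.
case/dvdpP: (unity_sum_poly_dvdp n_prime wn w1 qw) size_q => d -> size_q.
have [->|d_neq0] := eqVneq d 0; first by rewrite mul0r.
have /size1_polyC d_const : (size d <= 1)%N.
  move: size_q; rewrite size_mul ?unity_sum_poly_neq0 // size_unity_sum_poly //.
  by rewrite -subn1 addnC -addnBA ?size_poly_gt0 // -{2}[n]addn0 leq_add2l leqn0 subn_eq0.
rewrite hornerM horner1_unity_sum_poly d_const hornerC => /eqP.
rewrite mulf_eq0 pnatr_eq0 eqn0Ngt n_gt0 orbF => /eqP d0_eq0.
by move: d_neq0; rewrite d_const d0_eq0 eqxx.
Qed.

Lemma unity_root_sum_coef_eq0 (F : numFieldType) n (w : F) (e : 'F_n -> rat) :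
  prime n -> w ^+ n = 1 -> w != 1 ->
  \sum_(m : 'F_n) w ^+ m * ratr (e m) = 0 -> \sum_(m : 'F_n) e m = 0 ->
  forall m, e m = 0.
Proof.
move=> n_prime wn w1 sum_we sum_e.
pose q : {poly rat} := \sum_(m : 'F_n) e m *: 'X^m.
have coef_q (m : 'F_n) : q`_m = e m.
  rewrite coef_sum (bigD1 m) //= coefZ coefXn eqxx mulr1 big1 ?addr0 // => j jm.
  by rewrite coefZ coefXn (inj_eq val_inj) eq_sym (negbTE jm) mulr0.
suff q_eq0 : q = 0 by move=> m; rewrite -coef_q q_eq0 coef0.
apply: (unity_root_poly_eq0 n_prime wn w1).
- apply: (leq_trans (size_sum _ _ _)); apply/bigmax_leqP => m _.
  rewrite (leq_trans (size_scale_leq _ _)) // size_polyXn.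
  by rewrite -[X in (_ <= X)%N](Fp_cast n_prime) ltn_ord.
- rewrite /root rmorph_sum horner_sum (eq_bigr (fun m : 'F_n => w ^+ m * ratr (e m))).
    by rewrite sum_we.
  by move=> m _; rewrite /= map_polyZ map_polyXn hornerZ hornerXn mulrC.
- rewrite horner_sum -[RHS]sum_e; apply: eq_bigr => m _.
  by rewrite hornerZ hornerXn expr1n mulr1.
Qed.

Section Omega.
Variables (R : realType) (n : nat).
Local Notation theta := (2 * pi / n%:R : R).
Local Open Scope complex_scope.

Lemma omega_expr k : omega R n ^+ k = (cos (k%:R * theta) +i* (- sin (k%:R * theta))).
Proof.
elim: k => [|k IHk]; first by rewrite expr0 mul0r cos0 sin0 oppr0.
rewrite exprS IHk /omega; set th := 2 * pi / n%:R.
rewrite mulrSr mulrDl mul1r cosD sinD.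
by apply/eqP; rewrite eq_complex /=; apply/andP; split; apply/eqP; ring.
Qed.

Lemma omega_expr_order : (0 < n)%N -> omega R n ^+ n = 1.
Proof.
move=> n_gt0; rewrite omega_expr mulrC divfK ?pnatr_eq0 -?lt0n // mulr_natl.
by rewrite cos2pi sin2pi oppr0.
Qed.

Lemma omega_neq1 : (2 < n)%N -> omega R n != 1.
Proof.
move=> n_gt2; have n_gt0 : 0 < n%:R :> R by rewrite ltr0n (ltn_trans _ n_gt2).
apply/eqP => /(congr1 (@complex.Im R))/eqP; rewrite /= oppr_eq0; apply/negP.
rewrite gt_eqF // sin_gt0_pi // divr_gt0 ?mulr_gt0 ?pi_gt0 //=.
by rewrite ltr_pdivrMr // mulrC ltr_pM2l ?pi_gt0 // ltr_nat.
Qed.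

End Omega.

Lemma expr_Fp_mul (S : pzSemiRingType) n (w : S) (a b : 'F_n) :
  prime n -> w ^+ n = 1 -> w ^+ (nat_of_ord a * nat_of_ord b) = w ^+ nat_of_ord (a * b).
Proof.
move=> n_prime wn; rewrite -(expr_mod _ wn); congr (w ^+ _).
by rewrite /=; congr (_ %% _)%N; rewrite Fp_cast.
Qed.

Lemma ghat_divE (R : realType) n (gamma : 'F_n -> rat) (z : 'F_n) :
  prime n -> z != 0 ->
  ghat R gamma z = \sum_(m : 'F_n) omega R n ^+ m * ratr (gamma (m / z)).
Proof.
move=> n_prime z_neq0; rewrite /ghat (reindex_inj (mulIf (invr_neq0 z_neq0))).
apply: eq_bigr => m _.
by rewrite (expr_Fp_mul _ _ n_prime (omega_expr_order R (prime_gt0 n_prime))) divfK.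
Qed.

Lemma sum_Fp_div (n : nat) (gamma : 'F_n -> rat) (z : 'F_n) :
  z != 0 -> \sum_(m : 'F_n) gamma (m / z) = \sum_(m : 'F_n) gamma m.
Proof.
move=> z_neq0; rewrite (reindex_inj (mulIf z_neq0)).
by apply: eq_bigr => m _; rewrite mulfK.
Qed.

Lemma ghat_eq_mul_invariant (R : realType) n (gamma : 'F_n -> rat) (x y : 'F_n) :
  prime n -> (2 < n)%N -> x != 0 -> y != 0 -> ghat R gamma x = ghat R gamma y ->
  forall k, gamma (x^-1 * y * k) = gamma k.
Proof.
move=> n_prime n_gt2 x_neq0 y_neq0 ghat_xy k.
pose e m := gamma (m / x) - gamma (m / y).
suff /(_ (y * k))/eqP : forall m, e m = 0.
  by rewrite subr_eq0 [y * k / y]mulrC mulKf // => /eqP <-; congr gamma; ring.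
apply: (unity_root_sum_coef_eq0 n_prime (omega_expr_order R (prime_gt0 n_prime))
  (omega_neq1 R n_gt2)).
  rewrite -[RHS](subrr (ghat R gamma x)) {2}ghat_xy !ghat_divE // -sumrB.
  by apply: eq_bigr => m _; rewrite rmorphB mulrBr.
by rewrite sumrB !sum_Fp_div // subrr.
Qed.

Lemma same_law_mul n (gamma : 'F_n -> rat) (f1 f2 : 'F_n -> bool) (c : 'F_n) :
  c != 0 -> (forall k, gamma (c * k) = gamma k) -> (forall k, f1 k = f2 (c * k)) ->
  same_law gamma f1 f2.
Proof.
move=> c_neq0 gamma_c f_c T w; rewrite /walk_fdd.
have mul_path_inj : injective (fun p : {ffun 'I_T.+1 -> 'F_n} => [ffun i => c * p i]).
  move=> p1 p2 /ffunP p12; apply/ffunP => i.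
  by apply: (mulfI c_neq0); have := p12 i; rewrite !ffunE.
rewrite [RHS](reindex_inj mul_path_inj) /=; apply: eq_bigr => p _.
congr (_ * _ * _); apply: eq_bigr => i _; rewrite !ffunE.
  by rewrite -mulrBr gamma_c.
by rewrite f_c.
Qed.

Theorem lemma2 (R : realType) (n : nat) (n_prime : prime n) (n_gt5 : (5 < n)%N)
    (gamma : 'F_n -> rat) (gamma_distr : is_distr gamma)
    (x y : 'F_n) (x_nz : x != 0) (y_nz : y != 0)
    (hxy : ghat R gamma x = ghat R gamma y)
    (f1 f2 : 'F_n -> bool)
    (hf : forall k : 'F_n, f1 k = f2 (x^-1 * y * k)) :
  same_law gamma f1 f2.
Proof.
have n_gt2 : (2 < n)%N by apply: ltn_trans n_gt5.
apply: (same_law_mul _ (ghat_eq_mul_invariant n_prime n_gt2 x_nz y_nz hxy) hf).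
by rewrite mulf_neq0 ?invr_eq0.
Qed.
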